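(* Consider $\min_{\beta\in\mathbb{R}^p}\Phi(\beta)=f(\beta)+\sum_{j=1}^p g_j(\beta_j)$ with $f(\beta)=F(X\beta)$ for some $X\in\mathbb{R}^{n\times p}$. Suppose: (1) $f:\mathbb{R}^p\to\mathbb{R}$ is convex and differentiable and for each $j$ there is $L_j>0$ with $|\nabla_j f(x+he_j)-\nabla_j f(x)|\le L_j|h|$ for all $x\in\mathbb{R}^p,h\in\mathbb{R}$; each $g_j:\mathbb{R}\to\mathbb{R}$ is proper, closed and lower bounded; $\Phi$ admits at least one critical point; and for every $j$, $g_j/L_j$ is $\alpha$-semi-convex for some $\alpha<1$, i.e. $g_j/L_j+\frac{\alpha}{2}(\cdot)^2$ is convex. (2) The sequence $(\beta^{(k)})_{k\ge0}$ generated by cyclic proximal coordinate descent converges toward a critical point $\hat\beta$. (3) $\hat\beta$ is non-degenerate: for all $j\notin\mathcal{S}:=\mathrm{gsupp}(\hat\beta)$, $-\nabla_j f(\hat\beta)\in\mathrm{interior}(\partial g_j(\hat\beta_j))$. Then there exists $K>0$ such that for all $k\ge K$, $\beta^{(k)}_{\mathcal{S}^c}=\hat\beta_{\mathcal{S}^c}$.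
   Context: $\partial$ denotes the Fréchet subdifferential; with $g(\beta)=\sum_j g_j(\beta_j)$, a critical point of $\Phi$ is a point $x$ with $-\nabla f(x)\in\partial g(x)$. The generalized support is $\mathrm{gsupp}(\beta)=\{j\in[p]:\partial g_j(\beta_j)\text{ is a singleton}\}$, and $\mathcal{S}^c=[p]\setminus\mathcal{S}$. Cyclic proximal coordinate descent: starting from $\beta^{(0)}$, an epoch $k\to k+1$ updates successively for $j=1,\dots,p$ the $j$-th coordinate of the current point $\beta$ by $\beta_j\leftarrow\mathrm{prox}_{g_j/L_j}\big(\beta_j-\frac{1}{L_j}\nabla_j f(\beta)\big)$, where $\mathrm{prox}_{h}(z)=\arg\min_u \frac12(u-z)^2+h(u)$ (single-valued under the semi-convexity assumption); $\beta^{(k)}$ is the point after $k$ epochs. *)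

From HB Require Import structures.
From mathcomp Require Import all_boot all_order all_algebra.
From mathcomp Require Import all_classical all_reals all_analysis.
Set Implicit Arguments. Unset Strict Implicit. Unset Printing Implicit Defensive.
Import Order.TTheory GRing.Theory Num.Theory.
Import numFieldNormedType.Exports.
Local Open Scope classical_set_scope.
Local Open Scope ring_scope.

Section Defs.
Variable R : realType.

Definition basis_vec (p : nat) (j : 'I_p) : 'rV[R]_p := delta_mx 0 j.

Definition partial (p : nat) (f : 'rV[R]_p -> R) (j : 'I_p) (x : 'rV[R]_p) : R :=
  'D_(basis_vec j) f x.

Definition grad (p : nat) (f : 'rV[R]_p -> R) (x : 'rV[R]_p) : 'rV[R]_p :=
  \row_j partial f j x.

Definition convex_fun (V : lmodType R) (h : V -> R) : Prop :=
  forall (x y : V) (t : R), 0 <= t <= 1 ->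
    h (t *: x + (1 - t) *: y) <= t * h x + (1 - t) * h y.

(* Frechet subdifferential of a function on R^p (Euclidean pairing):
   v \in \partial h(x) iff liminf_{u -> x} (h u - h x - <v, u - x>) / |u - x| >= 0 *)
Definition frechet_subdiff (p : nat) (h : 'rV[R]_p -> R) (x : 'rV[R]_p) : set 'rV[R]_p :=
  [set v | forall eps : R, 0 < eps ->
     \forall u \near x,
       h u - h x - \sum_(i < p) v 0 i * (u 0 i - x 0 i) >= - eps * `|u - x|].

Definition frechet_subdiff1 (h : R -> R) (x : R) : set R :=
  [set v | forall eps : R, 0 < eps ->
     \forall u \near x, h u - h x - v * (u - x) >= - eps * `|u - x|].

Definition sep_sum (p : nat) (g : 'I_p -> R -> R) (b : 'rV[R]_p) : R :=
  \sum_(j < p) g j (b 0 j).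

Definition critical_point (p : nat) (f : 'rV[R]_p -> R) (g : 'I_p -> R -> R)
  (x : 'rV[R]_p) : Prop :=
  frechet_subdiff (sep_sum g) x (- grad f x).

Definition gsupp (p : nat) (g : 'I_p -> R -> R) (b : 'rV[R]_p) : set 'I_p :=
  [set j | exists v, frechet_subdiff1 (g j) (b 0 j) = [set v]].

Definition is_prox (h : R -> R) (z u : R) : Prop :=
  forall w, (u - z) ^+ 2 / 2 + h u <= (w - z) ^+ 2 / 2 + h w.

Definition set_coord (p : nat) (x : 'rV[R]_p) (j : 'I_p) (u : R) : 'rV[R]_p :=
  \row_i (if i == j then u else x 0 i).

Definition cd_epoch (p : nat) (f : 'rV[R]_p -> R) (g : 'I_p -> R -> R)
  (L : 'I_p -> R) (x y : 'rV[R]_p) : Prop :=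
  exists z : nat -> 'rV[R]_p,
    [/\ z 0%N = x, z p = y &
      forall j : 'I_p, exists u : R,
        is_prox (fun t => g j t / L j) (z j 0 j - partial f j (z j) / L j) u
        /\ z j.+1 = set_coord (z j) j u].

End Defs.

From HB Require Import structures.
From mathcomp Require Import all_boot all_order all_algebra.
From mathcomp Require Import all_classical all_reals all_analysis.
From mathcomp Require Import ring lra zify.
Set Implicit Arguments. Unset Strict Implicit. Unset Printing Implicit Defensive.
Import Order.TTheory GRing.Theory Num.Theory.
Import numFieldNormedType.Exports.
Local Open Scope classical_set_scope.
Local Open Scope ring_scope.

(* Fix a coordinate j outside the generalized support and write b = hatb_j,
   w = - \nabla_j f(hatb).  Non-degeneracy gives r > 0 such that w - r/2 and
   w + r/2 are Frechet subgradients of g_j at b.  In epoch k, coordinate j is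
   updated to prox_{g_j/L_j}(c_k), where L_j (c_k - b) =
   L_j (beta^k_j - b) - \nabla_j f(z_k) and z_k is the intermediate point of
   the epoch.  Every entry of z_k is an entry of beta^k or beta^(k+1), so
   z_k -> hatb; directional derivatives of a convex differentiable function
   are continuous, hence L_j (c_k - b) -> w.  Comparing the prox objective at
   beta^(k+1)_j with its value at b, using the two subgradient inequalities,
   then forces beta^(k+1)_j = b for all large k; there are finitely many
   coordinates. *)

Section ConvexDerivative.
Variables (R : realType) (V : normedModType R) (f : V -> R).
Hypotheses (f_convex : convex_fun f) (f_diff : forall x, differentiable f x).

Lemma convex_fun_secant x v t l : 0 <= l <= 1 ->
  f (x + (l * t) *: v) - f x <= l * (f (x + t *: v) - f x).
Proof.
move=> l01; have := @f_convex (x + t *: v) x l l01.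
rewrite scalerDr scalerA addrAC -scalerDl (addrC l) subrK scale1r; lra.
Qed.

Lemma derive_le_difference_quotient x v t : 0 < t ->
  'D_v f x <= (f (x + t *: v) - f x) / t.
Proof.
move=> t_gt0.
have quot_cvg := cvg_dnbhs_at_right (@diff_derivable _ _ _ f x v (f_diff x)).
apply: (cvgr_to_le quot_cvg).
near=> h; rewrite /= (addrC (h *: v)).
have h_gt0 : 0 < h by near: h; exact: nbhs_right_gt.
have h_lt_t : h < t by near: h; exact: nbhs_right_lt.
have ht01 : 0 <= h / t <= 1 by rewrite divr_ge0 ?ler_pdivrMr ?mul1r ?ltW.
have := convex_fun_secant x v t ht01; rewrite mulfVK ?gt_eqF //.
by rewrite ler_pdivrMl // mulrCA mulrC.
Unshelve. all: by end_near.
Qed.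

Lemma continuous_difference_quotient v t :
  continuous (fun x => (f (x + t *: v) - f x) / t).
Proof.
move=> x; apply: cvgM; last exact: cvg_cst.
apply: cvgB; last exact: differentiable_continuous.
apply: continuous_comp; first exact: (cvgD cvg_id (cvg_cst _)).
exact: differentiable_continuous.
Qed.

Lemma derive_le_near x0 v e : 0 < e ->
  \forall x \near x0, 'D_v f x <= 'D_v f x0 + e.
Proof.
move=> e_gt0; have e2_gt0 : 0 < e / 2 by rewrite divr_gt0.
have [t [t_gt0 quot_le]] : exists t, 0 < t /\
    (f (x0 + t *: v) - f x0) / t <= 'D_v f x0 + e / 2.
  have quot_cvg := cvg_dnbhs_at_right (@diff_derivable _ _ _ f x0 v (f_diff x0)).
  apply: (@filter_ex _ (0 : R)^'+); near=> t.
  split; first by near: t; exact: nbhs_right_gt.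
  have : `|'D_v f x0 - t^-1 * (f (t *: v + x0) - f x0)| <= e / 2.
    by near: t; move/cvgrPdist_le: quot_cvg; apply.
  by rewrite (addrC (t *: v)) (mulrC t^-1) ler_norml; lra.
have /cvgrPdist_le /(_ _ e2_gt0) := @continuous_difference_quotient v t x0.
apply: filter_app; near=> x => quot_near.
have := derive_le_difference_quotient x v t_gt0.
by move: quot_near; rewrite ler_norml; lra.
Unshelve. all: by end_near.
Qed.

Lemma derive_oppv x v : 'D_(- v) f x = - 'D_v f x.
Proof. by rewrite !deriveE // raddfN. Qed.

Lemma derive_continuous v : continuous ('D_v f).
Proof.
move=> x0; apply/cvgrPdist_le => e e_gt0.
have le_v := derive_le_near x0 v e_gt0.
have le_oppv := derive_le_near x0 (- v) e_gt0.
near=> x.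
have upper : 'D_v f x <= 'D_v f x0 + e by near: x; exact: le_v.
have lower : 'D_(- v) f x <= 'D_(- v) f x0 + e by near: x; exact: le_oppv.
by move: lower; rewrite !derive_oppv ler_norml; lra.
Unshelve. all: by end_near.
Qed.
End ConvexDerivative.

Lemma prox_eq_of_subgradients (R : realType) (h : R -> R) (L c b u wlo whi e : R) :
  0 < L -> is_prox (fun t => h t / L) c u ->
  - e * `|u - b| <= h u - h b - whi * (u - b) ->
  - e * `|u - b| <= h u - h b - wlo * (u - b) ->
  wlo + e <= L * (c - b) <= whi - e ->
  u = b.
Proof.
move=> L_gt0 /(_ b) prox_le sub_hi sub_lo /andP[lo_le le_hi].
have {}prox_le : L * (u - c) ^+ 2 / 2 + h u <= L * (b - c) ^+ 2 / 2 + h b.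
  move: prox_le; rewrite -(ler_pM2l L_gt0) !mulrDr !mulrA.
  by rewrite (mulrC L (h u)) (mulrC L (h b)) !mulfK ?gt_eqF.
(* For u > b, the prox inequality and the subgradient inequality for whi give
   (u - b) (whi - e - L (c - b)) <= - L (u - b)^2 / 2 < 0, against the upper
   bound on L (c - b); u < b is symmetric. *)
case: (ltgtP u b) => // [u_lt_b | b_lt_u].
- rewrite ltr0_norm ?subr_lt0 // in sub_lo.
  have : 0 <= (b - u) * (L * (c - b) - wlo - e) by apply: mulr_ge0; lra.
  have : 0 < L * ((b - u) * (b - u)) by rewrite mulr_gt0 ?mulr_gt0 ?subr_gt0.
  lra.
- rewrite gtr0_norm ?subr_gt0 // in sub_hi.
  have : 0 <= (u - b) * (whi - e - L * (c - b)) by apply: mulr_ge0; lra.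
  have : 0 < L * ((u - b) * (u - b)) by rewrite mulr_gt0 ?mulr_gt0 ?subr_gt0.
  lra.
Qed.

Lemma cvg_mx_entrywise_pick (K : numFieldType) (m n : nat)
    (a b z : nat -> 'M[K]_(m, n)) (x : 'M[K]_(m, n)) :
  a @ \oo --> x -> b @ \oo --> x ->
  (forall k i j, z k i j = a k i j \/ z k i j = b k i j) -> z @ \oo --> x.
Proof.
move=> /cvg_ballP a_cvg /cvg_ballP b_cvg z_pick; apply/cvg_ballP => e e_gt0.
near=> k; split=> // i j.
have [-> | ->] := z_pick k i j.
- by have [_] : ball x e (a k) by near: k; exact: a_cvg.
- by have [_] : ball x e (b k) by near: k; exact: b_cvg.
Unshelve. all: by end_near.
Qed.

Section CoordinateDescent.
Variables (R : realType) (p : nat) (f : 'rV[R]_p -> R) (g : 'I_p -> R -> R)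
  (L : 'I_p -> R).

Lemma set_coord_chain_unchanged (Z : nat -> 'rV[R]_p) :
  (forall j : 'I_p, exists u, Z j.+1 = set_coord (Z j) j u) ->
  forall (i k : nat) (m : 'I_p),
  (i <= k <= p)%N -> (m < i)%N || (k <= m)%N -> Z k 0 m = Z i 0 m.
Proof.
move=> step i k m /andP[]; elim: k => [|k IH] ik kp m_out.
  by move: ik; rewrite leqn0 => /eqP->.
have [->|i_ne] := eqVneq i k.+1; first by [].
have [u ->] := step (Ordinal kp).
rewrite mxE ifN; last by apply/eqP => /(congr1 val) /= m_eq; move: m_out; lia.
by apply: IH; lia.
Qed.

Lemma cd_epoch_coord x y : cd_epoch f g L x y -> forall j : 'I_p,
  exists2 z : 'rV[R]_p,
    forall m : 'I_p, z 0 m = if (m < j)%N then y 0 m else x 0 m &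
    is_prox (fun t => g j t / L j) (x 0 j - partial f j z / L j) (y 0 j).
Proof.
case=> Z [Z0 Zp step] j.
have unchanged : forall (i k : nat) (m : 'I_p),
    (i <= k <= p)%N -> (m < i)%N || (k <= m)%N -> Z k 0 m = Z i 0 m.
  by apply: set_coord_chain_unchanged => i; have [u [_ ->]] := step i; exists u.
have j_le_p : (j <= p)%N := ltnW (ltn_ord j).
have [u [u_prox Zj_next]] := step j.
have Zjj : Z j 0 j = x 0 j by rewrite -Z0 (unchanged 0%N) ?leqnn ?orbT.
have yj : y 0 j = u.
  by rewrite -Zp (unchanged j.+1) ?ltn_ord ?leqnn // Zj_next mxE eqxx.
exists (Z j); last by rewrite yj -Zjj.
move=> m; case: ltnP => [m_lt_j | j_le_m].
- by rewrite -Zp (unchanged j) ?j_le_p ?m_lt_j ?leqnn.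
- by rewrite -Z0 (unchanged 0%N) ?j_le_p ?j_le_m ?orbT.
Qed.
End CoordinateDescent.

Section NondegenerateCoordinate.
Variables (R : realType) (p : nat) (f : 'rV[R]_p -> R) (g : 'I_p -> R -> R)
  (L : 'I_p -> R) (beta : nat -> 'rV[R]_p) (hatb : 'rV[R]_p).
Hypotheses (L_gt0 : forall j, 0 < L j)
  (beta_cd : forall k, cd_epoch f g L (beta k) (beta k.+1))
  (beta_cvg : beta @ \oo --> hatb)
  (partial_cont : forall j, {for hatb, continuous (partial f j)}).

Lemma beta_entry_cvg j : (fun k => beta k 0 j) @ \oo --> hatb 0 j.
Proof. exact: (continuous_cvg _ (@coord_continuous _ _ _ 0 j hatb) beta_cvg). Qed.

Lemma cd_prox_center_cvg j : exists2 c : nat -> R,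
    (fun k => L j * (c k - hatb 0 j)) @ \oo --> - partial f j hatb &
    forall k, is_prox (fun t => g j t / L j) (c k) (beta k.+1 0 j).
Proof.
have /choice [z zP] : forall k, exists z : 'rV[R]_p,
    (forall m : 'I_p, z 0 m = if (m < j)%N then beta k.+1 0 m else beta k 0 m) /\
    is_prox (fun t => g j t / L j) (beta k 0 j - partial f j z / L j) (beta k.+1 0 j).
  by move=> k; have [z ? ?] := cd_epoch_coord (beta_cd k) j; exists z.
exists (fun k => beta k 0 j - partial f j (z k) / L j); last by move=> k; case: (zP k).
have z_cvg : z @ \oo --> hatb.
  apply: (cvg_mx_entrywise_pick (a := fun k => beta k.+1)) beta_cvg _ => [|k i m].
    by rewrite cvg_shiftS.
  by rewrite (ord1 i); case: (zP k) => -> _; case: ifP; [left|right].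
have partial_z_cvg : (fun k => partial f j (z k)) @ \oo --> partial f j hatb.
  exact: (continuous_cvg _ (@partial_cont j) z_cvg).
have lim : (fun k => L j * (beta k 0 j - hatb 0 j) - partial f j (z k)) @ \oo -->
    L j * (hatb 0 j - hatb 0 j) - partial f j hatb.
  apply: cvgB => //; apply: cvgM; first exact: cvg_cst.
  by apply: cvgB; [exact: (@beta_entry_cvg j) | exact: cvg_cst].
rewrite subrr mulr0 sub0r in lim; apply: cvg_trans lim; apply: near_eq_cvg; near=> k.
by field; rewrite gt_eqF.
Unshelve. all: by end_near.
Qed.

Lemma cd_coord_eventually_fixed j :
  interior (frechet_subdiff1 (g j) (hatb 0 j)) (- partial f j hatb) ->
  \forall k \near \oo, beta k.+1 0 j = hatb 0 j.
Proof.
move=> /nbhs_ballP [r /= r_gt0 ball_sub].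
set b := hatb 0 j; set w := - partial f j hatb.
have [c c_cvg c_prox] := cd_prox_center_cvg j.
have r4_gt0 : 0 < r / 4 by rewrite divr_gt0.
have sub_hi : frechet_subdiff1 (g j) b (w + r / 2).
  by apply: ball_sub; rewrite /ball /= opprD addrA subrr sub0r normrN gtr0_norm; lra.
have sub_lo : frechet_subdiff1 (g j) b (w - r / 2).
  by apply: ball_sub; rewrite /ball /= opprB addrC subrK gtr0_norm; lra.
have next_cvg : (fun k => beta k.+1 0 j) @ \oo --> b.
  by move: (@beta_entry_cvg j); rewrite -cvg_shiftS.
have hi_near := next_cvg _ (sub_hi _ r4_gt0).
have lo_near := next_cvg _ (sub_lo _ r4_gt0).
near=> k.
have c_near : `|w - L j * (c k - b)| <= r / 4.
  by near: k; move/cvgrPdist_le: c_cvg; apply.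
apply: (@prox_eq_of_subgradients R (g j) (L j) (c k) b _
  (w - r / 2) (w + r / 2) (r / 4)).
- exact: L_gt0.
- exact: c_prox.
- by near: k; exact: hi_near.
- by near: k; exact: lo_near.
- by move: c_near; rewrite ler_norml; lra.
Unshelve. all: by end_near.
Qed.

End NondegenerateCoordinate.

Theorem proposition3 (R : realType) (n p : nat)
  (X : 'M[R]_(n, p)) (F : 'cV[R]_n -> R) (f : 'rV[R]_p -> R)
  (g : 'I_p -> R -> R) (L : 'I_p -> R)
  (beta : nat -> 'rV[R]_p) (hatb : 'rV[R]_p) :
  (* f(beta) = F(X beta) *)
  (forall b, f b = F (X *m b^T)) ->
  (* (1) f convex, differentiable, coordinatewise Lipschitz gradient *)
  convex_fun f ->
  (forall x, differentiable f x) ->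
  (forall j, 0 < L j) ->
  (forall j x h, `|partial f j (x + h *: basis_vec R j) - partial f j x| <= L j * `|h|) ->
  (* g_j proper (real valued), closed (lsc), lower bounded *)
  (forall j, lower_semicontinuous (fun t : R => ((g j t)%:E : \bar R))) ->
  (forall j, exists m : R, forall t, m <= g j t) ->
  (* Phi admits a critical point *)
  (exists x, critical_point f g x) ->
  (* g_j / L_j is alpha-semi-convex for some alpha < 1 *)
  (exists alpha : R, alpha < 1 /\
     forall j, convex_fun (fun t : R^o => g j t / L j + alpha / 2 * t ^+ 2)) ->
  (* (2) beta generated by cyclic proximal CD, converging to a critical point hatb *)
  (forall k, cd_epoch f g L (beta k) (beta k.+1)) ->
  beta @ \oo --> hatb ->
  critical_point f g hatb ->
  (* (3) non-degeneracy *)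
  (forall j, ~ gsupp g hatb j ->
     interior (frechet_subdiff1 (g j) (hatb 0 j)) (- partial f j hatb)) ->
  exists K : nat, (0 < K)%N /\
    forall k, (K <= k)%N -> forall j, ~ gsupp g hatb j -> beta k 0 j = hatb 0 j.
Proof.
move=> _ f_convex f_diff L_gt0 _ _ _ _ _ beta_cd beta_cvg _ nondegenerate.
have partial_cont j : {for hatb, continuous (partial f j)}.
  exact: derive_continuous.
have fixed : \forall k \near \oo,
    forall j, ~ gsupp g hatb j -> beta k.+1 0 j = hatb 0 j.
  apply: filter_forall => j; have [in_supp | not_supp] := pselect (gsupp g hatb j).
    by apply: nearW => k /(_ in_supp).
  have := cd_coord_eventually_fixed L_gt0 beta_cd beta_cvg partial_cont
    (nondegenerate j not_supp).
  by apply: filterS => k ->.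
have [N _ fixedN] := fixed.
by exists N.+1; split => // -[|k] // le_Nk j; apply: fixedN.
Qed.
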